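(* Let $D$ be an integral domain with quotient field $K$, $n\ge1$, and $C\in M_n(D)$. Then $$\{f(C)\mid f\in \mathrm{Int}_K(M_n(D))\}=D[C],$$ where $D[C]=\{f(C)\mid f\in D[x]\}$.
   Context: $M_n(D)$ is the ring of $n\times n$ matrices over $D$; $\mathrm{Int}_K(M_n(D))=\{f\in K[x]\mid f(C)\in M_n(D)\text{ for all }C\in M_n(D)\}$, with $f(C)$ computed in $M_n(K)$. *)

From HB Require Import structures.
From mathcomp Require Import all_boot all_order all_algebra.
Set Implicit Arguments. Unset Strict Implicit. Unset Printing Implicit Defensive.
Import GRing.Theory.
Local Open Scope ring_scope.

Definition toK (D : idomainType) : D -> {fraction D} := @FracField.tofrac D.

Definition mxK (D : idomainType) (m : nat) (C : 'M[D]_m) : 'M[{fraction D}]_m :=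
  map_mx (@toK D) C.

(* Int_K(M_m(D)) for m = n.+1 >= 1: polynomials f in K[x] with
   f(C) in M_m(D) for all C in M_m(D), f(C) computed in M_m(K). *)
Definition IntK (D : idomainType) (n : nat) (f : {poly {fraction D}}) : Prop :=
  forall C : 'M[D]_n.+1, exists C' : 'M[D]_n.+1,
    horner_mx (mxK C) f = mxK C'.

From HB Require Import structures.
From mathcomp Require Import all_boot all_order all_algebra.
Set Implicit Arguments. Unset Strict Implicit. Unset Printing Implicit Defensive.
Import GRing.Theory.
Local Open Scope ring_scope.

(* Proof idea.  Write K for the fraction field of D and, for a matrix or
   polynomial over D, its image over K by the entrywise embedding.

   For the converse, let p be the characteristic polynomial of C: it is monic
   of degree n+1 with coefficients in D.  For f integer-valued, put
   r = f mod p in K[x], so deg r <= n and f(B) = r(B) for every matrix B that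
   is annihilated by p (in particular f(C) = r(C) by Cayley-Hamilton).
   Evaluate at the companion matrix A of p: it has entries in D, p(A) = 0,
   and the first row of A^i is the i-th unit vector for i <= n, so the first
   row of r(A) = f(A) is the coefficient vector of r.  As f(A) has entries in
   D, so has r, i.e. r = g for some g in D[x], and f(C) = g(C). *)

(* The companion matrix of p, of the size n+1 dictated by a polynomial of
   size n+2; it agrees with the library's [companionmx] up to a size cast,
   but having a [.+1] size makes it a ring element, so [horner_mx] applies. *)
Definition companion {R : nzRingType} (n : nat) (p : {poly R}) : 'M[R]_n.+1 :=
  \matrix_(i, j) if i == n :> nat then - p`_j else (i.+1 == j :> nat)%:R.

Section Companion.

Variables (R : comNzRingType) (n : nat) (p : {poly R}).
Local Notation A := (companion n p).

Lemma companion_pow_row0 i (k : 'I_n.+1) :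
  (i <= n)%N -> (A ^+ i) ord0 k = (i == k :> nat)%:R.
Proof.
elim: i k => [|i IHi] k lt_i_n; first by rewrite expr0 mxE.
have lti : (i < n.+1)%N by rewrite ltnS ltnW.
rewrite exprSr mxE (bigD1 (inord i)) //= big1 ?addr0.
  rewrite IHi; last exact: ltnW.
  by rewrite inordK // eqxx mul1r mxE inordK // (ltn_eqF lt_i_n).
move=> j /negPf neq_ji; rewrite IHi; last exact: ltnW.
have [eq_ij|] := eqVneq i j; last by rewrite mul0r.
by rewrite eq_ij inord_val eqxx in neq_ji.
Qed.

Lemma companion_horner_row0 (r : {poly R}) (k : 'I_n.+1) :
  (size r <= n.+1)%N -> (horner_mx A r) ord0 k = r`_k.
Proof.
move=> size_r; rewrite -[in LHS](coefK r) poly_def linear_sum /= summxE.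
under eq_bigr => i _.
  rewrite linearZ /= rmorphXn /= horner_mx_X mxE companion_pow_row0; last first.
    by rewrite -ltnS (leq_trans (ltn_ord i)).
  over.
have [lt_k_r|le_r_k] := ltnP k (size r); last first.
  rewrite nth_default // big1 // => i _.
  by rewrite ltn_eqF ?mulr0 // (leq_trans _ le_r_k).
rewrite (bigD1 (Ordinal lt_k_r)) //= eqxx mulr1 big1 ?addr0 // => i neq_ik.
have [eq_ik|] := eqVneq (i : nat) k; last by rewrite mulr0.
by rewrite -val_eqE /= eq_ik eqxx in neq_ik.
Qed.

Lemma companion_root : p \is monic -> size p = n.+2 -> horner_mx A p = 0.
Proof.
move=> monic_p size_p; have e : (size p).-1 = n.+1 by rewrite size_p.
have -> : A = castmx (e, e) (companionmx p).
  by apply/matrixP => i j; rewrite castmxE !mxE /= size_p.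
have char_cast m (e' : (size p).-1 = m) :
    char_poly (castmx (e', e') (companionmx p)) = p.
  by case: m / e'; rewrite castmx_id companionmxK.
by rewrite -[p in horner_mx _ p](char_cast _ e) Cayley_Hamilton.
Qed.

End Companion.

Lemma map_companion (R S : comNzRingType) (phi : {rmorphism R -> S}) n
    (p : {poly R}) :
  map_mx phi (companion n p) = companion n (map_poly phi p).
Proof.
apply/matrixP => i j; rewrite !mxE coef_map (fun_if phi).
by rewrite rmorphN rmorph_nat.
Qed.

Lemma horner_mx_modp (F : fieldType) n (B : 'M[F]_n.+1) (f q : {poly F}) :
  horner_mx B q = 0 -> horner_mx B f = horner_mx B (f %% q).
Proof.
by move=> qB0; rewrite {1}(divp_eq f q) rmorphD rmorphM /= qB0 mulr0 add0r.
Qed.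

Lemma mxK_horner (D : idomainType) n (B : 'M[D]_n.+1) (g : {poly D}) :
  mxK (horner_mx B g) = horner_mx (mxK B) (map_poly (@toK D) g).
Proof. exact: map_horner_mx. Qed.

Lemma IntK_modp_integral (D : idomainType) n (f : {poly {fraction D}})
    (p : {poly D}) :
  IntK n f -> p \is monic -> size p = n.+2 ->
  exists g : {poly D}, f %% map_poly (@toK D) p = map_poly (@toK D) g.
Proof.
move=> intf monic_p size_p.
set pK := map_poly (@toK D) p.
have monic_pK : pK \is monic by apply: monic_map.
have size_pK : size pK = n.+2.
  by rewrite size_map_poly_id0 // (monicP monic_p) /toK rmorph1 oner_neq0.
have size_r : (size (f %% pK)%R <= n.+1)%N.
  by rewrite -ltnS -size_pK ltn_modpN0 // -size_poly_eq0 size_pK.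
have [F intF] := intf (companion n p).
have F_companion : mxK F = horner_mx (companion n pK) (f %% pK).
  rewrite -intF /mxK /toK map_companion.
  exact: horner_mx_modp (companion_root monic_pK size_pK).
have row0_F (k : 'I_n.+1) : toK (F ord0 k) = (f %% pK)`_k.
  by rewrite -(companion_horner_row0 pK) // -F_companion mxE.
exists (\poly_(k < n.+1) F ord0 (inord k)).
apply/polyP => k; rewrite coef_map coef_poly.
have [lt_kn|le_nk] := ltnP k n.+1.
  have -> : inord k = Ordinal lt_kn by apply/val_inj/inordK.
  exact/esym/row0_F.
by rewrite nth_default ?(leq_trans size_r) ?rmorph0.
Qed.

Theorem mainTheorem3 (D : idomainType) (n : nat) (C : 'M[D]_n.+1)
    (M : 'M[{fraction D}]_n.+1) :
  (exists f : {poly {fraction D}}, IntK n f /\ horner_mx (mxK C) f = M) <->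
  (exists g : {poly D}, M = mxK (horner_mx C g)).
Proof.
split=> [[f [intf <-]] | [g ->]]; last first.
  exists (map_poly (@toK D) g); split; last by rewrite mxK_horner.
  by move=> B; exists (horner_mx B g); rewrite mxK_horner.
have [g mod_f] := IntK_modp_integral intf (char_poly_monic C) (size_char_poly C).
have CH : horner_mx (mxK C) (map_poly (@toK D) (char_poly C)) = 0.
  by rewrite -mxK_horner Cayley_Hamilton /mxK map_mx0.
by exists g; rewrite mxK_horner (horner_mx_modp _ CH) mod_f.
Qed.
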